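(* Let $d:\mathcal X\times\hat{\mathcal X}\to[0,\infty)$ be a distortion function such that the matrix $[e^{-s_1d(i,j)}]_{(i,j)\in\mathcal X\times\hat{\mathcal X}}$ is full rank. Then every eigenvalue of $M$ is strictly positive, where $$M_{ij}=q^*(i)\sum_xp(x)\frac{A(x,i)A(x,j)}{\big(\sum_kq^*(k)A(x,k)\big)^2}.$$
   Context: Finite alphabets $\mathcal X=\hat{\mathcal X}$, source distribution $p$, and multipliers $s_1,s_2\ge0$. $f:(0,\infty)\to\mathbb R$ is convex with $f(1)=0$ and twice differentiable, and $D_f(p\|q)=\sum_xq(x)f(p(x)/q(x))$. $q^*$ is a fixed point achieving the rate-distortion-perception function of the implicitly defined map $$S[q](i)=q(i)\sum_xp(x)\frac{A_q(x,i)}{\sum_kq(k)A_q(x,k)},\qquad A_q(x,i)=\exp\{-s_1d(x,i)-s_2[f(p(i)/S[q](i))-\tfrac{p(i)}{S[q](i)}f'(p(i)/S[q](i))]\},$$ and $A=A_{q^*}$. *)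

From HB Require Import structures.
From mathcomp Require Import all_boot all_order all_algebra.
From mathcomp Require Import all_classical all_reals all_analysis.
From mathcomp Require Import complex.
Set Implicit Arguments. Unset Strict Implicit. Unset Printing Implicit Defensive.
Import Order.TTheory GRing.Theory Num.Theory.
Local Open Scope ring_scope.

(* Alphabets X = Xhat = 'I_n.  Distributions are functions 'I_n -> R. *)

(* A_q(x,i) evaluated at a fixed point, where S[q] = q, i.e. with
   p(i)/S[q](i) replaced by p(i)/q(i). *)
Definition Afix (R : realType) (n : nat) (s1 s2 : R) (d : 'I_n -> 'I_n -> R)
  (f : R -> R) (p q : 'I_n -> R) (x i : 'I_n) : R :=
  expR (- (s1 * d x i)
        - s2 * (f (p i / q i) - p i / q i * derive1 f (p i / q i))).

Definition Sfix (R : realType) (n : nat) (s1 s2 : R) (d : 'I_n -> 'I_n -> R)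
  (f : R -> R) (p q : 'I_n -> R) (i : 'I_n) : R :=
  q i * \sum_(x < n) p x * Afix s1 s2 d f p q x i
          / \sum_(k < n) q k * Afix s1 s2 d f p q x k.

Definition Mmat (R : realType) (n : nat) (s1 s2 : R) (d : 'I_n -> 'I_n -> R)
  (f : R -> R) (p q : 'I_n -> R) : 'M[R]_n :=
  \matrix_(i < n, j < n)
    (q i * \sum_(x < n) p x * (Afix s1 s2 d f p q x i * Afix s1 s2 d f p q x j)
             / (\sum_(k < n) q k * Afix s1 s2 d f p q x k) ^+ 2).

Definition convex_pos (R : realType) (f : R -> R) : Prop :=
  forall x y t : R, 0 < x -> 0 < y -> 0 <= t <= 1 ->
    f (t * x + (1 - t) * y) <= t * f x + (1 - t) * f y.

Definition twice_diff_pos (R : realType) (f : R -> R) : Prop :=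
  forall x : R, 0 < x -> derivable f x 1 /\ derivable (derive1 f) x 1.

From HB Require Import structures.
From mathcomp Require Import all_boot all_order all_algebra.
From mathcomp Require Import all_classical all_reals all_analysis.
From mathcomp Require Import complex.
From mathcomp Require Import ring.
Set Implicit Arguments. Unset Strict Implicit. Unset Printing Implicit Defensive.
Import Order.TTheory GRing.Theory Num.Theory.
Local Open Scope ring_scope.
Local Open Scope complex_scope.

(* Write A for the matrix [A(x,i)], D_q = diag(q) and D_c = diag(c), where
   c(x) = p(x) / Z(x)^2 and Z(x) = sum_k q(k) A(x,k).  Then M = D_q (A^T D_c A),
   and A = E diag(h) with E = [exp(-s1 d(x,i))] invertible and h > 0, so A is
   invertible.  If v M = l v with v <> 0, put w = v D_q; then
     l * sum_i q(i) |v_i|^2 = w (A^T D_c A) w^* = sum_x c(x) |(w A^T)_x|^2,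
   where both sides are weighted norms of nonzero vectors, hence l > 0. *)

Lemma psumr_gt0 (R : numDomainType) (I : finType) (F : I -> R) (k : I) :
  (forall i, 0 <= F i) -> 0 < F k -> 0 < \sum_i F i.
Proof.
move=> F_ge0 Fk_gt0; rewrite (bigD1 k) //=.
by apply: (lt_le_trans Fk_gt0); rewrite lerDl sumr_ge0.
Qed.

Lemma unitmx_diag (F : fieldType) (n : nat) (d : 'rV[F]_n) :
  (forall i, d 0 i != 0) -> diag_mx d \in unitmx.
Proof.
by move=> d_neq0; rewrite unitmxE det_diag unitfE; apply/prodf_neq0.
Qed.

Section WeightedNorm.
Variable R : rcfType.
Local Open Scope sesquilinear_scope.
Local Notation cmx A := (map_mx (real_complex R) A).

Lemma trmxC_mul (m n p : nat) (A : 'M[R[i]]_(m, n)) (B : 'M[R[i]]_(n, p)) :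
  (A *m B)^t* = B^t* *m A^t*.
Proof. by rewrite trmx_mul map_mxM. Qed.

Lemma map_real_conjC (m n : nat) (A : 'M[R]_(m, n)) : cmx A ^ Num.conj = cmx A.
Proof. by apply/matrixP => i j; rewrite !mxE; exact: conjc_real. Qed.

Definition wnorm (m : nat) (c : 'rV[R]_m) (u : 'rV[R[i]]_m) : R[i] :=
  (u *m cmx (diag_mx c) *m u^t*) 0 0.

Lemma wnormE (m : nat) (c : 'rV[R]_m) (u : 'rV[R[i]]_m) :
  wnorm c u = \sum_x (c 0 x)%:C * (u 0 x * (u 0 x)^*).
Proof.
rewrite /wnorm map_diag_mx mul_mx_diag mxE; apply: eq_bigr => x _.
by rewrite !mxE; ring.
Qed.

Lemma wnorm_gt0 (m : nat) (c : 'rV[R]_m) (u : 'rV[R[i]]_m) :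
  (forall x, 0 < c 0 x) -> u != 0 -> 0 < wnorm c u.
Proof.
move=> c_gt0 /rV0Pn[k uk]; rewrite wnormE.
have cC_gt0 x : 0 < (c 0 x)%:C by rewrite ltcR.
apply: (@psumr_gt0 _ _ _ k) => [x|]; last by rewrite mulr_gt0 ?mul_conjC_gt0.
by rewrite mulr_ge0 ?mul_conjC_ge0 ?ltW.
Qed.

Lemma eigenvalue_mul_wnorm (n : nat) (q : 'rV[R]_n) (K : 'M[R]_n) v lambda :
  v *m cmx (diag_mx q *m K) = lambda *: v ->
  lambda * wnorm q v
  = (v *m cmx (diag_mx q) *m cmx K *m (v *m cmx (diag_mx q))^t*) 0 0.
Proof.
move=> vM; rewrite -[v *m _ *m cmx K]mulmxA -map_mxM vM.
rewrite trmxC_mul map_trmx map_real_conjC tr_diag_mx.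
by rewrite -scalemxAl mxE mulmxA.
Qed.

Lemma wnorm_congr (m n : nat) (a : 'M[R]_(m, n)) (c : 'rV[R]_m) w :
  (w *m cmx (a^T *m diag_mx c *m a) *m w^t*) 0 0 = wnorm c (w *m (cmx a)^T).
Proof.
rewrite /wnorm trmxC_mul /(_ ^t Num.conj) trmxK map_real_conjC !map_mxM map_trmx.
by rewrite !mulmxA.
Qed.

Lemma eigenvalue_diag_mul_congr_gt0 (m n : nat) (q : 'rV[R]_n) (c : 'rV[R]_m)
    (a : 'M[R]_(m, n)) (lambda : R[i]) :
  (forall i, 0 < q 0 i) -> (forall x, 0 < c 0 x) -> \rank a = n ->
  eigenvalue (cmx (diag_mx q *m (a^T *m diag_mx c *m a))) lambda ->
  0 < lambda.
Proof.
move=> q_gt0 c_gt0 rk_a /eigenvalueP[v /eigenvalue_mul_wnorm vM v_neq0].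
have qv_gt0 := wnorm_gt0 q_gt0 v_neq0.
set w := v *m cmx (diag_mx q) in vM.
have w_neq0 : w != 0.
  apply: contraTneq qv_gt0 => w0.
  by rewrite /wnorm -/w w0 mul0mx mxE ltxx.
have a_free : row_free ((cmx a)^T).
  by rewrite /row_free mxrank_tr mxrank_map rk_a.
have wa_neq0 : w *m (cmx a)^T != 0 by rewrite mulmx_free_eq0.
rewrite wnorm_congr in vM.
by rewrite -(mulfK (lt0r_neq0 qv_gt0) lambda) vM divr_gt0 ?wnorm_gt0.
Qed.

End WeightedNorm.


Section FixedPointMatrix.
Variables (R : realType) (n : nat) (s1 s2 : R) (d : 'I_n -> 'I_n -> R).
Variables (f : R -> R) (p q : 'I_n -> R).

Local Notation A := (Afix s1 s2 d f p q).

Definition Afix_mx : 'M[R]_n := \matrix_(x, i) A x i.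

Definition Zfix (x : 'I_n) : R := \sum_k q k * A x k.

Lemma Afix_mx_factor :
  Afix_mx = \matrix_(x, i) expR (- (s1 * d x i)) *m
    diag_mx (\row_i expR (- (s2 * (f (p i / q i)
                                   - p i / q i * derive1 f (p i / q i))))).
Proof. by apply/matrixP => x i; rewrite mul_mx_diag !mxE -expRD. Qed.

Lemma rank_Afix_mx :
  \rank (\matrix_(x, i) expR (- (s1 * d x i))) = n -> \rank Afix_mx = n.
Proof.
move=> rk_E; rewrite Afix_mx_factor mxrankMfree // row_free_unit.
by apply: unitmx_diag => i; rewrite mxE gt_eqF ?expR_gt0.
Qed.

Lemma Zfix_gt0 x : (forall k, 0 < q k) -> 0 < Zfix x.
Proof.
move=> q_gt0; apply: (@psumr_gt0 _ _ _ x) => [k|].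
  by rewrite mulr_ge0 ?ltW ?expR_gt0.
by rewrite mulr_gt0 ?expR_gt0.
Qed.

Lemma MmatE :
  Mmat s1 s2 d f p q = diag_mx (\row_i q i) *m
    (Afix_mx^T *m diag_mx (\row_x (p x / Zfix x ^+ 2)) *m Afix_mx).
Proof.
apply/matrixP => i j; rewrite mul_diag_mx !mxE; congr (_ * _).
apply: eq_bigr => x _; rewrite mul_mx_diag !mxE /Zfix; ring.
Qed.

End FixedPointMatrix.

Theorem lemma4 (R : realType) (n : nat) (s1 s2 : R)
  (d : 'I_n -> 'I_n -> R) (f : R -> R) (p q : 'I_n -> R) :
  0 <= s1 -> 0 <= s2 ->
  (* source distribution p, with full support (needed for f(p(i)/q(i))) *)
  (forall x, 0 < p x) -> \sum_(x < n) p x = 1 ->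
  (* q* is a distribution with full support, fixed point of S *)
  (forall i, 0 < q i) -> \sum_(i < n) q i = 1 ->
  (forall i, Sfix s1 s2 d f p q i = q i) ->
  (* f convex on (0,oo), f(1) = 0, twice differentiable *)
  convex_pos f -> f 1 = 0 -> twice_diff_pos f ->
  (* distortion function *)
  (forall x y, 0 <= d x y) ->
  \rank (\matrix_(i < n, j < n) expR (- (s1 * d i j))) = n ->
  forall lambda : R[i],
    eigenvalue (map_mx (fun r : R => r%:C) (Mmat s1 s2 d f p q)) lambda ->
    0 < lambda.
Proof.
move=> _ _ p_gt0 _ q_gt0 _ _ _ _ _ _ rk_E lambda.
rewrite MmatE; apply: eigenvalue_diag_mul_congr_gt0 => [i|x|].
- by rewrite mxE.
- by rewrite mxE divr_gt0 ?exprn_gt0 ?Zfix_gt0.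
- exact: rank_Afix_mx.
Qed.
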